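(* Let $A$ be a nontrivial commutative ring. The following conditions are equivalent: (a) $A$ is sublocalizable. (b) $1 + A^\times \subseteq A^\times \cup J(A)$. (c) $A^\times \cup J(A)$ is a subring of $A$. (d) There exists a proper ideal $I$ of $A$ such that $A^\times \cup I$ is a subring of $A$. (e) $J(A)$ is the unique proper ideal $I$ of $A$ such that $A^\times \cup I$ is a subring of $A$. (f) $B\setminus A^\times$ is an ideal of $A$ for some subring $B$ of $A$ containing $A^\times$ (in which case $B = A^\times \cup J(A)$ and $B\setminus A^\times = J(A)$ are unique). (g) $A^\times \cup J(A)$ is a local subring of $A$ (with maximal ideal $J(A)$ and having the same units as $A$). (h) $A$ has a (unique) local subring with maximal ideal $J(A)$ and having the same units as $A$. (i) $A$ has a (unique) local subring whose maximal ideal is also an ideal of $A$ and whose units are the same as those of $A$. (j) $A$ has a (unique) local subring $B$ with $B^\times = A^\times$ and $J(B) = J(A)$. (k) $A/J(A)$ is sublocalizable. (l) $A/J(A)$ is unit-additive.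
   Context: $A^\times$ is the unit group and $J(A)$ the Jacobson radical of $A$; $1+A^\times=\{1+u\mid u\in A^\times\}$ and $A^\times+A^\times=\{u+v\mid u,v\in A^\times\}$. A commutative ring $A$ is sublocalizable if it is nontrivial and $A^\times+A^\times\subseteq A^\times\cup J(A)$. A commutative ring is unit-additive if for all units $u,v$, $u+v$ is a unit or nilpotent. *)

From HB Require Import structures.
From mathcomp Require Import all_boot all_order all_algebra.
Set Implicit Arguments. Unset Strict Implicit. Unset Printing Implicit Defensive.
Import GRing.Theory.
Local Open Scope ring_scope.

(* Subsets of a commutative ring are Prop-valued predicates R -> Prop.
   All notions are defined relative to a subset S (meant to be a subring),
   so that they apply both to A itself (S = whole) and to subrings of A. *)
Section Defs.
Variable R : comNzRingType.

Definition whole : R -> Prop := fun _ => True.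
Definition sunion (P Q : R -> Prop) : R -> Prop := fun x => P x \/ Q x.
Definition sameset (P Q : R -> Prop) : Prop := forall x, P x <-> Q x.

Definition subring (S : R -> Prop) : Prop :=
  [/\ S 1, (forall x y, S x -> S y -> S (x - y)) & (forall x y, S x -> S y -> S (x * y))].

Definition ideal_of (S I : R -> Prop) : Prop :=
  [/\ (forall x, I x -> S x), I 0, (forall x y, I x -> I y -> I (x + y))
    & (forall r x, S r -> I x -> I (r * x))].

Definition proper_ideal_of (S I : R -> Prop) : Prop := ideal_of S I /\ ~ I 1.

Definition maximal_ideal_of (S M : R -> Prop) : Prop :=
  proper_ideal_of S M /\
  forall I, proper_ideal_of S I -> (forall x, M x -> I x) -> forall x, I x -> M x.

Definition jacobson_of (S : R -> Prop) (x : R) : Prop :=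
  S x /\ forall M, maximal_ideal_of S M -> M x.

Definition unit_of (S : R -> Prop) (x : R) : Prop :=
  S x /\ exists y, S y /\ x * y = 1.

Definition local_subring (S : R -> Prop) : Prop :=
  subring S /\ exists M, maximal_ideal_of S M /\
    forall M', maximal_ideal_of S M' -> sameset M' M.

Definition units : R -> Prop := unit_of whole.
Definition jacobson : R -> Prop := jacobson_of whole.

Definition nilpotent (x : R) : Prop := exists n : nat, x ^+ n = 0.

Definition sublocalizable : Prop :=
  (1 : R) != 0 /\
  forall u v, units u -> units v -> units (u + v) \/ jacobson (u + v).

Definition unit_additive : Prop :=
  forall u v, units u -> units v -> units (u + v) \/ nilpotent (u + v).

Definition f_prop (B : R -> Prop) : Prop :=
  [/\ subring B, (forall x, units x -> B x)
    & ideal_of whole (fun x => B x /\ ~ units x)].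

Definition h_prop (B : R -> Prop) : Prop :=
  [/\ local_subring B, maximal_ideal_of B jacobson & sameset (unit_of B) units].

Definition i_prop (B : R -> Prop) : Prop :=
  [/\ local_subring B,
      (exists M, maximal_ideal_of B M /\ ideal_of whole M)
    & sameset (unit_of B) units].

Definition j_prop (B : R -> Prop) : Prop :=
  [/\ local_subring B, sameset (unit_of B) units & sameset (jacobson_of B) jacobson].

End Defs.

Definition is_quotient_by_jacobson (A B : comNzRingType) (f : {rmorphism A -> B}) : Prop :=
  (forall b, exists a, f a = b) /\ (forall a, f a = 0 <-> jacobson a).

From HB Require Import structures.
From mathcomp Require Import all_boot all_order all_algebra.
From mathcomp Require Import boolp classical_sets ring_quotient.
Set Implicit Arguments. Unset Strict Implicit. Unset Printing Implicit Defensive.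
Import GRing.Theory.
Local Open Scope classical_set_scope.
Local Open Scope ring_scope.

(* Everything hinges on the set U ∪ J of units and Jacobson elements.  Since
   u + j is a unit for u a unit and j in J, the set U ∪ J is closed under
   subtraction exactly when a sum of two units is a unit or lies in J, i.e.
   when A is sublocalizable; it is always closed under products.  A local
   subring B with B^x = A^x is U ∪ M for its maximal ideal M, and each of
   the conditions (d)-(j) forces M = J.  Finally x ∈ J iff 1 - ax is a unit
   for all a, so units of A/J(A) lift to units of A, J(A/J(A)) = 0, and J(A)
   is radical, which turns (a) into (k) and (l) and back. *)

Section Ring.
Variable R : comNzRingType.
Implicit Types (S I M B : R -> Prop) (x y u v : R).

Local Notation U := (@units R).
Local Notation J := (@jacobson R).
Local Notation W := (@whole R).
Local Notation UJ := (sunion (@units R) (@jacobson R)).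

Lemma unitsP x : U x <-> exists y, x * y = 1.
Proof. by split=> [[_ [y [_ xy]]]|[y xy]]; [exists y | split=> //; exists y]. Qed.

Lemma units1 : U 1.
Proof. by apply/unitsP; exists 1; rewrite mulr1. Qed.

Lemma unitsM x y : U x -> U y -> U (x * y).
Proof.
move=> /unitsP[a xa] /unitsP[b yb]; apply/unitsP; exists (a * b).
by rewrite mulrACA xa yb mulr1.
Qed.

Lemma unitsN x : U x -> U (- x).
Proof. by move=> /unitsP[a xa]; apply/unitsP; exists (- a); rewrite mulrNN. Qed.

Lemma units_mulr_factor x y : U (x * y) -> U x.
Proof. by move=> /unitsP[a xya]; apply/unitsP; exists (y * a); rewrite mulrA. Qed.

Lemma units_inverse x : U x -> exists2 y, U y & x * y = 1.
Proof.
move=> /unitsP[y xy]; exists y => //; apply/unitsP; exists x.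
by rewrite mulrC.
Qed.

Lemma sameset_sym (P Q : R -> Prop) : sameset P Q -> sameset Q P.
Proof. by move=> PQ x; split=> /PQ. Qed.

Lemma sameset_trans (P Q T : R -> Prop) :
  sameset P Q -> sameset Q T -> sameset P T.
Proof. by move=> PQ QT x; split=> [/PQ/QT|/QT/PQ]. Qed.

Lemma sunion_sameset (P Q T : R -> Prop) :
  sameset Q T -> sameset (sunion P Q) (sunion P T).
Proof. by move=> QT x; split=> -[?|/QT ?]; [left|right|left|right]. Qed.

Lemma sameset_unique (P : (R -> Prop) -> Prop) C :
  (forall B, P B -> sameset B C) ->
  forall B1 B2, P B1 -> P B2 -> sameset B1 B2.
Proof.
move=> PC B1 B2 PB1 PB2.
exact: sameset_trans (PC B1 PB1) (sameset_sym (PC B2 PB2)).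
Qed.

Lemma subring_whole : subring W.
Proof. by []. Qed.

Lemma subring0 S : subring S -> S 0.
Proof. by case=> S1 SB _; rewrite -(subrr 1); apply: SB. Qed.

Lemma subringN S x : subring S -> S x -> S (- x).
Proof.
by move=> sS Sx; rewrite -sub0r; case: (sS) => _ SB _; apply: SB; first exact: subring0.
Qed.

Lemma subringD S x y : subring S -> S x -> S y -> S (x + y).
Proof.
by move=> sS Sx Sy; rewrite -[y]opprK; case: (sS) => _ SB _; apply: SB; last exact: subringN.
Qed.

Lemma subring_sameset S S' : sameset S S' -> subring S -> subring S'.
Proof.
move=> SS' [S1 SB SM]; split; first exact/SS'.
- by move=> x y /SS' Sx /SS' Sy; apply/SS'; apply: SB.
- by move=> x y /SS' Sx /SS' Sy; apply/SS'; apply: SM.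
Qed.

Lemma ideal_sameset S I I' : sameset I I' -> ideal_of S I -> ideal_of S I'.
Proof.
move=> II' [IS I0 ID IM]; split; first by move=> x /II'; apply: IS.
- exact/II'.
- by move=> x y /II' Ix /II' Iy; apply/II'; apply: ID.
- by move=> r x Sr /II' Ix; apply/II'; apply: IM.
Qed.

Lemma ideal_unit1 S I x : ideal_of S I -> I x -> unit_of S x -> I 1.
Proof. by move=> [_ _ _ IM] Ix [_ [y [Sy <-]]]; rewrite mulrC; apply: IM. Qed.

Lemma proper_ideal_bigcup S (F : set (set R)) X0 x0 :
  F X0 -> X0 x0 -> (forall X x, F X -> X x -> proper_ideal_of S X) ->
  total_on F subset -> proper_ideal_of S (\bigcup_(X in F) X).
Proof.
move=> FX0 X0x0 idF chF.
have ideal_at X x := idF X x; split; [split|].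
- by move=> x [X FX Xx]; have [[XS _ _ _] _] := ideal_at X x FX Xx; exact: XS.
- by have [[_ X00 _ _] _] := ideal_at X0 x0 FX0 X0x0; exists X0.
- move=> x y [X FX Xx] [Y FY Yy].
  have [XY|YX] := chF X Y FX FY.
  + have [[_ _ YD _] _] := ideal_at Y y FY Yy.
    by exists Y => //; apply: YD => //; apply: XY.
  + have [[_ _ XD _] _] := ideal_at X x FX Xx.
    by exists X => //; apply: XD => //; apply: YX.
- move=> r x Sr [X FX Xx]; have [[_ _ _ XM] _] := ideal_at X x FX Xx.
  by exists X => //; apply: XM.
- by move=> [X FX X1]; have [_] := ideal_at X 1 FX X1.
Qed.

(* Zorn's lemma; the empty set is admitted as a candidate so that the union of
   the empty chain is again a candidate. *)
Lemma maximal_ideal_above S I : proper_ideal_of S I ->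
  exists2 M, maximal_ideal_of S M & forall x, I x -> M x.
Proof.
move=> PI.
pose P X := X = set0 \/ proper_ideal_of S X /\ I `<=` X.
have PX X x : P X -> X x -> proper_ideal_of S X /\ I `<=` X.
  by case=> [-> []|].
have [M [PM Mmax]] : exists M, P M /\ forall B, M `<` B -> ~ P B.
  apply: Zorn_bigcup => F FP chF.
  have [[X0 FX0 [x0 X0x0]]|noX] := EM (exists2 X, F X & X !=set0); last first.
    left; apply/seteqP; split=> // x [X FX Xx].
    by apply: noX; exists X => //; exists x.
  right; split.
    apply: (proper_ideal_bigcup FX0 X0x0) => // X x FX Xx.
    by case: (PX X x (FP X FX) Xx).
  by move=> x Ix; exists X0 => //; case: (PX X0 x0 (FP X0 FX0) X0x0) => _; apply.
case: PM => [M0|[PM IM]].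
  have [[_ I0 _ _] _] := PI.
  by case: (Mmax I); [rewrite M0; split=> // /(_ 0 I0) []|right; split].
exists M => //; split=> // I' PI' MI' x I'x.
apply: contrapT => nMx; apply: (Mmax I'); last by right; split=> // y /IM /MI'.
by split=> // I'M; apply: nMx; apply: I'M.
Qed.

Lemma nonunit_maximal_ideal S b : subring S -> S b -> ~ unit_of S b ->
  exists2 M, maximal_ideal_of S M & M b.
Proof.
move=> sS Sb nUb; have [S1 _ SM] := sS.
pose Ib x := exists2 s, S s & x = s * b.
have PIb : proper_ideal_of S Ib.
  split; [split|].
  - by move=> x [s Ss ->]; apply: SM.
  - by exists 0; [exact: subring0|rewrite mul0r].
  - move=> x y [s Ss ->] [t St ->]; exists (s + t); last by rewrite mulrDl.
    exact: subringD.
  - by move=> r x Sr [s Ss ->]; exists (r * s); [apply: SM|rewrite mulrA].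
  - by move=> [s Ss sb]; apply: nUb; split=> //; exists s; rewrite mulrC sb.
have [M MM IbM] := maximal_ideal_above PIb; exists M => //; apply: IbM.
by exists 1; rewrite ?mul1r.
Qed.

Lemma jacobsonP x : J x <-> forall a, U (1 - a * x).
Proof.
split=> [[_ Jx] a|Ux].
  apply: contrapT => nU.
  have [M MM M1ax] := nonunit_maximal_ideal subring_whole I nU.
  have Mx := Jx _ MM; have [[[_ _ MD MI] M1] _] := MM.
  by apply: M1; rewrite -(subrK (a * x) 1); apply: MD => //; apply: MI.
split=> // M [[iM M1] Mmax]; have [_ M0 MD MM] := iM.
apply: contrapT => nMx.
pose Mx y := exists m r, M m /\ y = m + r * x.
have iMx : ideal_of W Mx.
  split=> //.
  - by exists 0, 0; rewrite mul0r addr0.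
  - move=> y z [m [r [Mm ->]]] [m' [r' [Mm' ->]]]; exists (m + m'), (r + r').
    by split; [apply: MD|rewrite mulrDl addrACA].
  - move=> c y _ [m [r [Mm ->]]]; exists (c * m), (c * r).
    by split; [apply: MM|rewrite mulrDr mulrA].
have [[m [r [Mm m1]]]|nMx1] := EM (Mx 1).
  apply: M1; apply: (ideal_unit1 iM Mm).
  have -> : m = 1 - r * x by rewrite m1 addrK.
  exact: Ux.
apply: nMx; apply: (Mmax Mx) => //.
  by move=> y My; exists y, 0; rewrite mul0r addr0.
by exists 0, 1; rewrite add0r mul1r.
Qed.

Lemma jacobson_ideal : ideal_of W J.
Proof.
split=> //.
- by split=> // M [[[_ M0 _ _] _] _].
- move=> x y [_ Jx] [_ Jy]; split=> // M MM.
  by have [[[_ _ MD _] _] _] := MM; apply: MD; [apply: Jx|apply: Jy].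
- move=> r x _ [_ Jx]; split=> // M MM.
  by have [[[_ _ _ MI] _] _] := MM; apply: MI => //; apply: Jx.
Qed.

Lemma jacobson_proper : proper_ideal_of W J.
Proof.
split; first exact: jacobson_ideal.
move=> /jacobsonP /(_ 1); rewrite mulr1 subrr => /unitsP[y].
by rewrite mul0r => /eqP; rewrite eq_sym oner_eq0.
Qed.

Lemma jacobson_nonunit x : J x -> ~ U x.
Proof.
by move=> Jx Ux; apply: jacobson_proper.2; apply: (ideal_unit1 jacobson_ideal Jx).
Qed.

Lemma unitsDJ u j : U u -> J j -> U (u + j).
Proof.
move=> Uu /jacobsonP Jj; have [v Uv uv] := units_inverse Uu.
have -> : u + j = u * (1 - (- v) * j).
  by rewrite mulNr opprK mulrDr mulr1 mulrA uv mul1r.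
exact: unitsM.
Qed.

Lemma jacobson_root x n : J (x ^+ n) -> J x.
Proof.
move=> /jacobsonP Jxn; apply/jacobsonP => a.
have := Jxn (a ^+ n); rewrite -exprMn.
have -> : 1 - (a * x) ^+ n = (1 - a * x) * (\sum_(i < n) (a * x) ^+ i).
  by rewrite -opprB subrX1 -mulNr opprB.
exact: units_mulr_factor.
Qed.

(* If U ∪ I is a subring then 1 - ax ∈ U ∪ I for x ∈ I, and it cannot lie in
   the proper ideal I; conversely x ∈ J gives (1 + x) - 1 ∈ U ∪ I with x ∉ U. *)
Lemma subring_units_ideal_jacobson I :
  proper_ideal_of W I -> subring (sunion U I) -> sameset I J.
Proof.
move=> [[_ I0 ID IM] I1] [_ SB _] x; split=> [Ix|Jx].
  apply/jacobsonP => a.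
  have [//|I1ax] : sunion U I (1 - a * x).
    by apply: SB; [left; exact: units1|right; apply: IM].
  by case: I1; rewrite -(subrK (a * x) 1); apply: ID => //; apply: IM.
have U1x : U (1 + x) by have := (jacobsonP x).1 Jx (-1); rewrite mulN1r opprK.
have : sunion U I ((1 + x) - 1) by apply: SB; [left|left; exact: units1].
by rewrite addrC addKr => -[/(jacobson_nonunit Jx)|].
Qed.

Lemma sublocalizable_subring_UJ : sublocalizable R <-> subring UJ.
Proof.
have [_ J0 JD JM] := jacobson_ideal.
have JN x : J x -> J (- x) by move=> Jx; rewrite -mulN1r; apply: JM.
split=> [[_ UUJ]|[_ SB _]]; last first.
  split; first exact: oner_neq0.
  by move=> u v Uu Uv; rewrite -[v]opprK; apply: SB; left; last exact: unitsN.
split; first by left; exact: units1.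
- move=> x y [Ux|Jx] [Uy|Jy].
  + by apply: UUJ => //; apply: unitsN.
  + by left; apply: unitsDJ => //; apply: JN.
  + by left; rewrite addrC; apply: unitsDJ => //; apply: unitsN.
  + by right; apply: JD => //; apply: JN.
- move=> x y [Ux|Jx] [Uy|Jy]; first by left; apply: unitsM.
  + by right; apply: JM.
  + by right; rewrite mulrC; apply: JM.
  + by right; apply: JM.
Qed.

(* u + v = u (1 + u^-1 v) *)
Lemma one_add_unitsP :
  (forall u, U u -> U (1 + u) \/ J (1 + u)) <-> sublocalizable R.
Proof.
split=> [U1U|[_ UUJ] u Uu]; last exact: UUJ units1 Uu.
split=> [|u v Uu Uv]; first exact: oner_neq0.
have [w Uw uw] := units_inverse Uu.
have -> : u + v = u * (1 + w * v) by rewrite mulrDr mulr1 mulrA uw mul1r.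
have [|U1wv|J1wv] := U1U (w * v); first exact: unitsM.
  by left; apply: unitsM.
by right; have [_ _ _ JM] := jacobson_ideal; apply: JM.
Qed.

Lemma proper_ideal_subringP :
  (exists I, proper_ideal_of W I /\ subring (sunion U I)) <-> subring UJ.
Proof.
split=> [[I [PI sUI]]|sUJ]; last by exists J; split=> //; exact: jacobson_proper.
exact: subring_sameset (sunion_sameset U (subring_units_ideal_jacobson PI sUI)) sUI.
Qed.

Lemma jacobson_unique_subringP :
  [/\ proper_ideal_of W J, subring UJ
    & forall I, proper_ideal_of W I -> subring (sunion U I) -> sameset I J]
  <-> subring UJ.
Proof.
split=> [[]//|sUJ]; split=> //; first exact: jacobson_proper.
exact: subring_units_ideal_jacobson.
Qed.

Lemma unit_of_UJ : sameset (unit_of UJ) U.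
Proof.
move=> x; split=> [[_ [y [_ xy]]]|Ux]; first by apply/unitsP; exists y.
have [y Uy xy] := units_inverse Ux; split; first by left.
by exists y; split=> //; left.
Qed.

Lemma jacobson_maximal_UJ : maximal_ideal_of UJ J.
Proof.
have [_ J0 JD JM] := jacobson_ideal; split.
  split; last exact: jacobson_proper.2.
  by split=> // [x Jx|r x _ Jx]; [right|apply: JM].
move=> I [[IS I0 ID IM] I1] JI x Ix.
have [Ux|//] := IS x Ix; case: I1.
by apply: (ideal_unit1 (S := UJ) (x := x)) => //; apply/unit_of_UJ.
Qed.

Lemma maximal_UJ_jacobson M : maximal_ideal_of UJ M -> sameset M J.
Proof.
move=> [[iM M1] Mmax].
have MJ x : M x -> J x.
  have [MS _ _ _] := iM; move=> Mx; have [Ux|//] := MS x Mx; case: M1.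
  by apply: (ideal_unit1 iM Mx); apply/unit_of_UJ.
move=> x; split; first exact: MJ.
by apply: Mmax => //; have [] := jacobson_maximal_UJ.
Qed.

Lemma local_UJP : local_subring UJ <-> subring UJ.
Proof.
split=> [[]//|sUJ]; split=> //; exists J.
by split; [exact: jacobson_maximal_UJ|exact: maximal_UJ_jacobson].
Qed.

(* A non-unit of B lies in some maximal ideal of B, which is M by locality. *)
Lemma local_subring_units_sunion B M : local_subring B ->
  sameset (unit_of B) U -> maximal_ideal_of B M -> sameset B (sunion U M).
Proof.
move=> [sB [M0 [_ M0uniq]]] unitB MM x; split=> [Bx|[Ux|Mx]].
- have [Ux|nUx] := EM (U x); first by left.
  have [M' MM' M'x] := nonunit_maximal_ideal sB Bx (fun h => nUx ((unitB x).1 h)).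
  by right; apply/(M0uniq _ MM); apply/(M0uniq _ MM').
- by have [] := (unitB x).2 Ux.
- by have [[[MB _ _ _] _] _] := MM; apply: MB.
Qed.

Lemma local_subring_jacobson B M : local_subring B ->
  maximal_ideal_of B M -> sameset (jacobson_of B) M.
Proof.
move=> [_ [M0 [_ M0uniq]]] MM x; split=> [[_ JBx]|Mx]; first exact: JBx.
split; first by have [[[MB _ _ _] _] _] := MM; apply: MB.
by move=> M' MM'; apply/(M0uniq _ MM'); apply/(M0uniq _ MM).
Qed.

Lemma exists_subring_UJP (P : (R -> Prop) -> Prop) :
  (forall B, P B -> subring B) -> (forall B, P B -> sameset B UJ) ->
  (subring UJ -> P UJ) -> (exists B, P B) <-> subring UJ.
Proof.
move=> Psubring PUJ UJP; split=> [[B PB]|/UJP]; last by exists UJ.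
exact: subring_sameset (PUJ B PB) (Psubring B PB).
Qed.

Lemma sunion_units_nonunits B : (forall x, U x -> B x) ->
  sameset B (sunion U (fun x => B x /\ ~ U x)).
Proof.
move=> UB x; split=> [Bx|[/UB //|[]//]].
by have [Ux|nUx] := EM (U x); [left|right].
Qed.

Lemma f_prop_nonunits B : f_prop B -> sameset (fun x => B x /\ ~ U x) J.
Proof.
move=> [sB UB iBU]; apply: subring_units_ideal_jacobson.
  by split=> // -[_]; apply; exact: units1.
exact: subring_sameset (sunion_units_nonunits UB) sB.
Qed.

Lemma f_prop_UJ B : f_prop B -> sameset B UJ.
Proof.
move=> fB; have [_ UB _] := fB.
exact: sameset_trans (sunion_units_nonunits UB) (sunion_sameset U (f_prop_nonunits fB)).
Qed.

Lemma f_propP : (exists B, f_prop B) <-> subring UJ.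
Proof.
apply: exists_subring_UJP => [B []//|B|sUJ]; first exact: f_prop_UJ.
split=> //; first by move=> x Ux; left.
apply: ideal_sameset jacobson_ideal => x.
split=> [Jx|[[Ux nUx|//]]]; last by case: nUx.
by split; [right|apply: jacobson_nonunit].
Qed.

Lemma h_prop_UJ B : h_prop B -> sameset B UJ.
Proof. by move=> [lB MJ unitB]; apply: local_subring_units_sunion. Qed.

Lemma h_propP : (exists B, h_prop B) <-> subring UJ.
Proof.
apply: exists_subring_UJP => [B [[]]//|B|sUJ]; first exact: h_prop_UJ.
by split; [exact/local_UJP|exact: jacobson_maximal_UJ|exact: unit_of_UJ].
Qed.

Lemma i_prop_UJ B : i_prop B -> sameset B UJ.
Proof.
move=> [lB [M [MM iM]] unitB]; have BUM := local_subring_units_sunion lB unitB MM.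
have sUM : subring (sunion U M) by exact: subring_sameset BUM lB.1.
apply: sameset_trans BUM (sunion_sameset _ _); apply: subring_units_ideal_jacobson sUM.
by split=> //; have [[_ ?] _] := MM.
Qed.

Lemma i_propP : (exists B, i_prop B) <-> subring UJ.
Proof.
apply: exists_subring_UJP => [B [[]]//|B|sUJ]; first exact: i_prop_UJ.
split; [exact/local_UJP| |exact: unit_of_UJ].
by exists J; split; [exact: jacobson_maximal_UJ|exact: jacobson_ideal].
Qed.

Lemma j_prop_UJ B : j_prop B -> sameset B UJ.
Proof.
move=> [lB unitB JB]; have [_ [M [MM _]]] := lB.
apply: sameset_trans (local_subring_units_sunion lB unitB MM) (sunion_sameset _ _).
exact: sameset_trans (sameset_sym (local_subring_jacobson lB MM)) JB.
Qed.

Lemma j_propP : (exists B, j_prop B) <-> subring UJ.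
Proof.
apply: exists_subring_UJP => [B [[]]//|B|sUJ]; first exact: j_prop_UJ.
have lUJ : local_subring UJ by exact/local_UJP.
split=> //; first exact: unit_of_UJ.
exact: local_subring_jacobson jacobson_maximal_UJ.
Qed.

End Ring.

Section QuotientByJacobson.
Variables (A B : comNzRingType) (f : {rmorphism A -> B}).
Hypothesis fJ : is_quotient_by_jacobson f.

Lemma units_rmorph a : units a -> units (f a).
Proof.
by move=> /unitsP[y ay]; apply/unitsP; exists (f y); rewrite -rmorphM ay rmorph1.
Qed.

(* If f (a c) = 1 then a c ∈ 1 + J(A) consists of units. *)
Lemma units_lift a : units (f a) -> units a.
Proof.
move=> /unitsP[y fay]; have [c fc] := fJ.1 y.
have Jac1 : jacobson (a * c - 1).
  by apply/fJ.2; rewrite rmorphB rmorphM fc fay rmorph1 subrr.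
by have := unitsDJ (units1 A) Jac1; rewrite addrC subrK => /units_mulr_factor.
Qed.

Lemma jacobson_quotient_eq0 (y : B) : jacobson y -> y = 0.
Proof.
move=> Jy; have [a fa] := fJ.1 y; rewrite -fa; apply/fJ.2/jacobsonP => r.
apply: units_lift; rewrite rmorphB rmorphM rmorph1 fa.
exact: (jacobsonP y).1 Jy (f r).
Qed.

Lemma sublocalizable_quotient : sublocalizable A -> sublocalizable B.
Proof.
move=> [_ UUJ]; split=> [|u v]; first exact: oner_neq0.
have [a <-] := fJ.1 u; have [b <-] := fJ.1 v.
move=> /units_lift Ua /units_lift Ub; rewrite -rmorphD.
have [Uab|Jab] := UUJ a b Ua Ub; first by left; apply: units_rmorph.
by right; rewrite (fJ.2 _).2 //; have [] := jacobson_ideal B.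
Qed.

Lemma quotient_unit_additive : sublocalizable B -> unit_additive B.
Proof.
move=> [_ UUJ] u v Uu Uv; have [|Juv] := UUJ u v Uu Uv; first by left.
by right; exists 1%N; rewrite expr1; apply: jacobson_quotient_eq0.
Qed.

Lemma unit_additive_quotient : unit_additive B -> sublocalizable A.
Proof.
move=> UUN; split=> [|u v Uu Uv]; first exact: oner_neq0.
have [|[n]] := UUN (f u) (f v) (units_rmorph Uu) (units_rmorph Uv).
  by rewrite -rmorphD => /units_lift; left.
by rewrite -rmorphD -rmorphXn => /fJ.2 Juvn; right; apply: jacobson_root Juvn.
Qed.

End QuotientByJacobson.

Section JacobsonQuotient.
Local Open Scope quotient_scope.
Variable A : comNzRingType.

Definition jacobson_pred : {pred A} := fun x => `[< jacobson x >].

Lemma jacobson_pred_idealr : idealr_closed jacobson_pred.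
Proof.
have [_ J0 JD JM] := jacobson_ideal A; split; first exact/asboolP.
- by apply/asboolP; exact: (jacobson_proper A).2.
- by move=> a u v /asboolP Ju /asboolP Jv; apply/asboolP; apply: JD => //; exact: JM.
Qed.

HB.instance Definition _ := isIdealr.Build A jacobson_pred jacobson_pred_idealr.

Definition jacobson_quotient := {ideal_quot jacobson_pred}.
Definition jacobson_proj : A -> jacobson_quotient := \pi_jacobson_quotient.

Lemma jacobson_proj_zmod_morphism : zmod_morphism jacobson_proj.
Proof. by move=> x y; rewrite /jacobson_proj !piE. Qed.

Lemma jacobson_proj_monoid_morphism : monoid_morphism jacobson_proj.
Proof. by split=> [|x y]; rewrite /jacobson_proj !piE. Qed.

HB.instance Definition _ :=
  GRing.isZmodMorphism.Build A jacobson_quotient jacobson_proj jacobson_proj_zmod_morphism.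
HB.instance Definition _ :=
  GRing.isMonoidMorphism.Build A jacobson_quotient jacobson_proj jacobson_proj_monoid_morphism.

Lemma jacobson_proj_quotient : is_quotient_by_jacobson jacobson_proj.
Proof.
split=> [b|a]; first by exists (repr b); exact: reprK.
have := Quotient.idealrBE jacobson_pred a 0; rewrite subr0 rmorph0 => Ja.
split=> [pia0|Ja']; last by apply/eqP; rewrite -Ja; exact/asboolP.
by have /asboolP : a \in jacobson_pred by rewrite Ja; apply/eqP.
Qed.

End JacobsonQuotient.

Lemma quotient_sublocalizableP (A : comNzRingType) :
  (forall (B : comNzRingType) (f : {rmorphism A -> B}),
     is_quotient_by_jacobson f -> sublocalizable B) <-> sublocalizable A.
Proof.
split=> [QA|SA B f fJ]; last exact: sublocalizable_quotient fJ SA.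
have fJ := jacobson_proj_quotient A.
exact: unit_additive_quotient fJ (quotient_unit_additive fJ (QA _ _ fJ)).
Qed.

Lemma quotient_unit_additiveP (A : comNzRingType) :
  (forall (B : comNzRingType) (f : {rmorphism A -> B}),
     is_quotient_by_jacobson f -> unit_additive B) <-> sublocalizable A.
Proof.
split=> [QA|SA B f fJ]; last exact: quotient_unit_additive fJ (sublocalizable_quotient fJ SA).
have fJ := jacobson_proj_quotient A; exact: unit_additive_quotient fJ (QA _ _ fJ).
Qed.

Theorem proposition9p10 (A : comNzRingType) :
  [<->
   (* (a) *) sublocalizable A;
   (* (b) *) (forall u : A, units u -> units (1 + u) \/ jacobson (1 + u));
   (* (c) *) subring (sunion (@units A) (@jacobson A));
   (* (d) *) (exists I : A -> Prop, proper_ideal_of (@whole A) I /\ subring (sunion (@units A) I));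
   (* (e) *) [/\ proper_ideal_of (@whole A) (@jacobson A),
                 subring (sunion (@units A) (@jacobson A))
               & forall I : A -> Prop, proper_ideal_of (@whole A) I ->
                   subring (sunion (@units A) I) -> sameset I (@jacobson A)];
   (* (f) *) (exists B : A -> Prop, f_prop B);
   (* (g) *) local_subring (sunion (@units A) (@jacobson A));
   (* (h) *) (exists B : A -> Prop, h_prop B);
   (* (i) *) (exists B : A -> Prop, i_prop B);
   (* (j) *) (exists B : A -> Prop, j_prop B);
   (* (k) *) (forall (B : comNzRingType) (f : {rmorphism A -> B}),
                is_quotient_by_jacobson f -> sublocalizable B);
   (* (l) *) (forall (B : comNzRingType) (f : {rmorphism A -> B}),
                is_quotient_by_jacobson f -> unit_additive B)]
  /\
  [/\ (* parenthetical of (f) *)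
      (forall B : A -> Prop, f_prop B ->
         sameset B (sunion (@units A) (@jacobson A)) /\
         sameset (fun x => B x /\ ~ units x) (@jacobson A)),
      (* parenthetical of (g) *)
      (local_subring (sunion (@units A) (@jacobson A)) ->
         maximal_ideal_of (sunion (@units A) (@jacobson A)) (@jacobson A) /\
         sameset (unit_of (sunion (@units A) (@jacobson A))) (@units A)),
      (* uniqueness in (h) *)
      (forall B1 B2 : A -> Prop, h_prop B1 -> h_prop B2 -> sameset B1 B2),
      (* uniqueness in (i) *)
      (forall B1 B2 : A -> Prop, i_prop B1 -> i_prop B2 -> sameset B1 B2)
    & (* uniqueness in (j) *)
      (forall B1 B2 : A -> Prop, j_prop B1 -> j_prop B2 -> sameset B1 B2)].
Proof.
have Ea := sublocalizable_subring_UJ A.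
split.
  tfae.
  - by move/one_add_unitsP.
  - by move/one_add_unitsP/Ea.
  - by move/proper_ideal_subringP.
  - by move/proper_ideal_subringP/jacobson_unique_subringP.
  - by move/jacobson_unique_subringP/f_propP.
  - by move/f_propP/local_UJP.
  - by move/local_UJP/h_propP.
  - by move/h_propP/i_propP.
  - by move/i_propP/j_propP.
  - by move/j_propP/Ea/quotient_sublocalizableP.
  - by move/quotient_sublocalizableP/quotient_unit_additiveP.
  - by move/quotient_unit_additiveP.
split.
- by move=> B fB; split; [exact: f_prop_UJ|exact: f_prop_nonunits].
- by move=> _; split; [exact: jacobson_maximal_UJ|exact: unit_of_UJ].
- exact: sameset_unique (@h_prop_UJ A).
- exact: sameset_unique (@i_prop_UJ A).
- exact: sameset_unique (@j_prop_UJ A).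
Qed.
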